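(* For integers $N>3$ and $k\in\{1,\dots,N-2\}$ and real $t>0$, let $I_t(k,N)=\sum_{j=k+1}^{N-1}e^{-t(1-\cos(\pi j/N))}$. Then (i) $\displaystyle I_t(k,N)\le \frac12\sqrt{\frac\pi2}\,\frac{N}{\sqrt t}\,e^{-2tk^2/N^2}$, and (ii) $\displaystyle I_t(k,N)\le \frac12\,\frac{N^2}{kt}\,e^{-2tk^2/N^2}$. *)

From Stdlib Require Import Reals.
Open Scope R_scope.

(* I_t(k,N) = sum_{j=k+1}^{N-1} exp(-t (1 - cos(pi j / N))).
   Written as sum_{i=0}^{N-2-k} of the term at j = k+1+i
   (sum_f_R0 f n = f 0 + ... + f n); valid since k <= N-2. *)
Definition It (t : R) (k N : nat) : R :=
  sum_f_R0 (fun i => exp (- t * (1 - cos (PI * INR (k + 1 + i) / INR N))))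
           (N - 2 - k).

(* Jordan's inequality sin y >= 2y/PI on [0, PI/2] gives 1 - cos x >= 2x^2/PI^2 on
   [0, PI], so the term of index j of I_t(k,N) is at most exp (- a j^2) with
   a = 2t/N^2.  Write j = k + m with m >= 1.  Since j^2 >= k^2 + m^2, the sum is at
   most exp (- a k^2) times sum_{m>=1} exp (- a m^2), a lower Riemann sum of the
   Gaussian integral int_0^oo exp (- a x^2) dx = sqrt (PI/a) / 2; this gives (i).
   Since j^2 >= k^2 + 2km, it is also at most exp (- a k^2) times the geometric sum
   sum_{m>=1} exp (- 2akm) <= 1/(2ak); this gives (ii). *)

From Stdlib Require Import Reals Lra Lia Psatz.
Open Scope R_scope.

From mathcomp Require all_boot all_order all_algebra.
From mathcomp Require all_classical all_reals all_analysis measurable_realfun.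
From mathcomp Require Rstruct Rstruct_topology.

Module Gaussian.
Import all_boot all_order all_algebra.
Import all_classical all_reals all_analysis measurable_realfun.
Import Rstruct Rstruct_topology.
Import Order.TTheory GRing.Theory Num.Theory.
Import numFieldNormedType.Exports.
Local Open Scope classical_set_scope.
Local Open Scope ring_scope.

Section gauss_riemann_sum.
Context {R : realType}.
Local Notation mu := (@lebesgue_measure R).

Definition gauss_int0 (x : R) := \int[mu]_(t in `[0, x]) gauss_fun t.

Let gauss_integrable (A : set R) : measurable A -> mu.-integrable A (EFin \o gauss_fun).
Proof. by move=> mA; apply: integrableS integrableT_gauss. Qed.

Lemma gauss_int0_le (x : R) : gauss_int0 x <= Num.sqrt pi / 2.
Proof.
rewrite -lee_fin /gauss_int0 /Rintegral fineK; last first.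
  by apply: integrable_fin_num => //; exact: gauss_integrable.
rewrite -integral0y_gauss; apply: ge0_subset_integral => //=.
- by apply/measurable_EFinP; apply: measurable_funTS; exact: measurable_gauss_fun.
- by move=> y _; rewrite lee_fin gauss_fun_ge0.
- by move=> y /=; rewrite !in_itv /= => /andP[-> _].
Qed.

Lemma gauss_int0_increment (x y : R) : 0 <= x -> x <= y ->
  (y - x) * gauss_fun y <= gauss_int0 y - gauss_int0 x.
Proof.
move=> x0 xy; rewrite /gauss_int0 Rintegral_itvB ?bnd_simp //; last first.
  exact: gauss_integrable.
have -> : (y - x) * gauss_fun y = \int[mu]_(t in `]x, y]) gauss_fun y.
  have itvE : mu `]x, y] = (y - x)%:E.
    rewrite lebesgue_measure_itv /= lte_fin.
    by case: ltgtP xy => // -> _; rewrite subrr.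
  by rewrite Rintegral_cst // [X in fine X]itvE mulrC.
apply: le_Rintegral => //.
- apply: (@integrableS _ _ _ mu `[x, y]) => //=.
  + by apply: subset_itv; rewrite bnd_simp.
  + apply: continuous_compact_integrable; first exact: segment_compact.
    by apply: continuous_subspaceT => ?; exact: cst_continuous.
- exact: gauss_integrable.
- move=> t; rewrite /= in_itv /= => /andP[xt ty].
  have t0 : 0 <= t by apply: ltW; apply: le_lt_trans xt.
  by rewrite /gauss_fun ler_expR lerN2 lerXn2r ?nnegrE// (le_trans x0 xy).
Qed.

Lemma sum_gauss_le (u : R) (M : nat) : 0 < u ->
  \sum_(0 <= m < M) u * gauss_fun (u * m.+1%:R) <= Num.sqrt pi / 2.
Proof.
move=> u0; apply: le_trans (gauss_int0_le (u * M%:R)).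
elim: M => [|M IH].
  by rewrite big_geq // /gauss_int0; apply: Rintegral_ge0 => t _; exact: gauss_fun_ge0.
have step := @gauss_int0_increment (u * M%:R) (u * M.+1%:R).
rewrite -mulrBr -natrB // subSnn mulr1 in step.
rewrite big_nat_recr //= (le_trans (lerD IH (step _ _))) ?subrKC //.
  by rewrite mulr_ge0 // ltW.
by rewrite ler_pM2l // ler_nat.
Qed.

End gauss_riemann_sum.

Lemma RcosE (x : R) : Rtrigo_def.cos x = cos x.
Proof.
rewrite /Rtrigo_def.cos; case: exist_cos => y; rewrite /cos_in /infinite_sum => ub.
apply: (cvg_unique _ _ (@cvg_cos_coeff' R x)) => //=.
rewrite -cvg_shiftS /=; apply/(@cvgrPdist_lt _ R^o) => e /RltP /ub[N Nub].
near=> n.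
have /Nub : (n >= N)%coq_nat by apply/ssrnat.leP; near: n; exact: nbhs_infty_ge.
rewrite RdistE distrC sum_f_R0E => /RltP; congr (`| _ - _ | < e).
apply: eq_bigr => k _; rewrite /cos_n /cos_coeff' RdivE !RpowE factE INRE.
have -> : (2 * k)%coq_nat = k.*2 by rewrite -mul2n.
have -> : Rsqr x = x ^+ 2 by rewrite /Rsqr expr2.
by rewrite -exprM mul2n (_ : (-1)%coqR = -1) // RmultE mulrAC.
Unshelve. all: by end_near.
Qed.

Lemma RpiE : PI = pi.
Proof.
have PI0 : 0 < PI by apply/RltP; exact: PI_RGT_0.
have pi0 : 0 < pi :> R := pi_gt0 R.
apply/le_anti/andP; split; rewrite leNgt; apply/negP => lt_pi.
- have /andP[/RltP lb /RltP ub] : - (PI / 2) < pi / 2 < PI / 2.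
    by rewrite ltr_pM2r // lt_pi andbT (@lt_trans _ _ 0) ?oppr_lt0 ?divr_gt0.
  by have /RltP := cos_gt_0 _ lb ub; rewrite RcosE cos_pihalf ltxx.
- have : - (pi / 2) < PI / 2 < pi / 2.
    by rewrite ltr_pM2r // lt_pi andbT (@lt_trans _ _ 0) ?oppr_lt0 ?divr_gt0.
  by move/cos_gt0_pihalf; rewrite -RcosE cos_PI2 ltxx.
Qed.

Lemma sum_exp_neg_sq_le (a : R) (n : nat) : (0 < a)%coqR ->
  (sum_f_R0 (fun i => exp (- a * INR (S i) ^ 2)) n <= / 2 * sqrt (PI / a))%coqR.
Proof.
move=> /RltP a0; apply/RleP.
have sa0 : 0 < Num.sqrt a by rewrite sqrtr_gt0.
have gaussE (m : nat) : gauss_fun (Num.sqrt a * m%:R) = expR (- a * m%:R ^+ 2).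
  by rewrite /gauss_fun exprMn sqr_sqrtr ?(ltW a0) // mulNr.
have := @sum_gauss_le _ _ n.+1 sa0.
rewrite -mulr_sumr (eq_bigr _ (fun m _ => gaussE m.+1)) => /le_trans sum_le.
rewrite sum_f_R0E RpiE RsqrtE RinvE RdivE (sqrtrM _ (pi_ge0 R)) (sqrtrV (ltW a0)).
under eq_bigr do rewrite RexpE RpowE INRE.
rewrite -(ler_pM2l sa0); apply: sum_le.
by rewrite (_ : 2%coqR = 2) // mulrCA [Num.sqrt a * _]mulrCA divff ?gt_eqF // mulr1 mulrC.
Qed.

End Gaussian.

Lemma Jordan_sin_ge (y : R) : 0 <= y -> y <= PI / 2 -> 2 * y / PI <= sin y.
Proof.
intros y_ge0 y_le.
assert (PI_gt3 : 3 < PI) by (generalize PI2_3_2; lra).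
assert (PI_le4 : PI <= 4) by apply PI_4.
(* Third-order Taylor bound at 0 on [0, 7/5], second-order one at PI/2 beyond. *)
destruct (Rle_lt_dec y (7 / 5)) as [y_small | y_large].
- assert (sin_ge : y - y ^ 3 / 6 <= sin y).
  { destruct (sin_bound y 0 y_ge0 ltac:(lra)) as [lb _].
    unfold sin_approx, sin_term in lb; simpl in lb; lra. }
  assert (2 * y / PI <= 2 * y / 3).
  { unfold Rdiv; apply Rmult_le_compat_l; [lra | apply Rinv_le_contravar; lra]. }
  nra.
- set (z := PI / 2 - y).
  replace y with (PI / 2 - z) by (unfold z; ring).
  rewrite sin_shift.
  assert (cos_ge : 1 - z ^ 2 / 2 <= cos z).
  { destruct (cos_bound z 0 ltac:(unfold z; lra) ltac:(unfold z; lra)) as [lb _].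
    unfold cos_approx, cos_term in lb; simpl in lb; lra. }
  assert (z * PI <= 4) by (unfold z; nra).
  assert (2 * (PI / 2 - z) / PI = 1 - 2 * z / PI) by (field; lra).
  assert (z ^ 2 / 2 <= 2 * z / PI).
  { apply (Rmult_le_reg_r PI); [lra |].
    replace (2 * z / PI * PI) with (2 * z) by (field; lra).
    assert (0 <= z) by (unfold z; lra). nra. }
  lra.
Qed.

Lemma one_sub_cos_ge (x : R) : 0 <= x -> x <= PI -> 2 * x ^ 2 / PI ^ 2 <= 1 - cos x.
Proof.
intros x_ge0 x_le.
assert (PI_gt0 : 0 < PI) by apply PI_RGT_0.
assert (sin_ge := Jordan_sin_ge (x / 2) ltac:(lra) ltac:(lra)).
assert (0 <= 2 * (x / 2) / PI)
  by (apply Rmult_le_pos; [lra | apply Rlt_le, Rinv_0_lt_compat; lra]).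
replace x with (2 * (x / 2)) at 2 by field.
rewrite cos_2a_sin.
replace (2 * x ^ 2 / PI ^ 2) with (2 * (2 * (x / 2) / PI) ^ 2) by (field; lra).
nra.
Qed.

Lemma exp_le_exp (x y : R) : x <= y -> exp x <= exp y.
Proof. intros [lt | ->]; [apply Rlt_le, exp_increasing, lt | apply Rle_refl]. Qed.

Lemma sum_exp_neg_mul_le (b : R) (n : nat) :
  0 < b -> sum_f_R0 (fun i => exp (- b * INR (S i))) n <= / b.
Proof.
intros b_gt0.
set (S_n := sum_f_R0 (fun i => exp (- b * INR (S i))) n).
assert (telescope : S_n * (exp b - 1) = 1 - exp (- b * INR (S n))).
{ unfold S_n; induction n as [| n IH].
  - simpl; rewrite Rmult_1_r, Rmult_minus_distr_l, <- exp_plus.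
    replace (- b + b) with 0 by ring; rewrite exp_0; ring.
  - rewrite tech5, Rmult_plus_distr_r, IH, Rmult_minus_distr_l, <- exp_plus.
    replace (- b * INR (S (S n)) + b) with (- b * INR (S n))
      by (rewrite (S_INR (S n)); ring).
    ring. }
assert (1 + b <= exp b) by apply exp_ineq1_le.
assert (0 < exp (- b * INR (S n))) by apply exp_pos.
assert (0 <= S_n) by (apply cond_pos_sum; intro; left; apply exp_pos).
apply (Rmult_le_reg_r b); [lra |]; rewrite Rinv_l by lra.
nra.
Qed.

Lemma exp_neg_one_sub_cos_le (t : R) (j N : nat) : 0 <= t -> (0 < N)%nat -> (j <= N)%nat ->
  exp (- t * (1 - cos (PI * INR j / INR N))) <= exp (- (2 * t / INR N ^ 2) * INR j ^ 2).
Proof.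
intros t_ge0 N_gt0 j_le.
assert (PI_gt0 : 0 < PI) by apply PI_RGT_0.
assert (N_pos : 0 < INR N) by (apply lt_0_INR; lia).
assert (j_leR : INR j <= INR N) by (apply le_INR; lia).
assert (j_ge0 := pos_INR j).
set (x := PI * INR j / INR N).
assert (x_ge0 : 0 <= x)
  by (apply Rmult_le_pos; [nra | apply Rlt_le, Rinv_0_lt_compat; lra]).
assert (x_le : x <= PI).
{ apply (Rmult_le_reg_r (INR N)); [lra |]; unfold x; field_simplify; nra. }
assert (cos_ge := one_sub_cos_ge x x_ge0 x_le).
replace (2 * x ^ 2 / PI ^ 2) with (2 / INR N ^ 2 * INR j ^ 2) in cos_ge
  by (unfold x; field; lra).
apply exp_le_exp.
replace (- (2 * t / INR N ^ 2) * INR j ^ 2) with (- t * (2 / INR N ^ 2 * INR j ^ 2))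
  by (field; lra).
nra.
Qed.

Lemma It_le_sum_exp_neg_sq (t : R) (k N : nat) :
  0 <= t -> (0 < N)%nat -> (k <= N - 2)%nat ->
  It t k N <= sum_f_R0 (fun i => exp (- (2 * t / INR N ^ 2) * (INR k + INR (S i)) ^ 2))
                       (N - 2 - k).
Proof.
intros t_ge0 N_gt0 k_le.
apply sum_Rle; intros i i_le.
replace (INR k + INR (S i)) with (INR (k + 1 + i)) by (rewrite <- plus_INR; f_equal; lia).
apply exp_neg_one_sub_cos_le; [assumption | assumption | lia].
Qed.

Lemma sum_exp_neg_sq_shift_le (a c : R) (n : nat) : 0 <= a -> 0 <= c ->
  sum_f_R0 (fun i => exp (- a * (c + INR (S i)) ^ 2)) n
  <= exp (- a * c ^ 2) * sum_f_R0 (fun i => exp (- a * INR (S i) ^ 2)) n.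
Proof.
intros a_ge0 c_ge0; rewrite scal_sum.
apply sum_Rle; intros i _.
rewrite Rmult_comm, <- exp_plus; apply exp_le_exp.
assert (0 <= a * (c * INR (S i))) by (apply Rmult_le_pos, Rmult_le_pos, pos_INR; lra).
nra.
Qed.

Lemma sum_exp_neg_sq_shift_le_geom (a c : R) (n : nat) : 0 <= a ->
  sum_f_R0 (fun i => exp (- a * (c + INR (S i)) ^ 2)) n
  <= exp (- a * c ^ 2) * sum_f_R0 (fun i => exp (- (2 * a * c) * INR (S i))) n.
Proof.
intros a_ge0; rewrite scal_sum.
apply sum_Rle; intros i _.
rewrite Rmult_comm, <- exp_plus; apply exp_le_exp.
assert (0 <= a * INR (S i) ^ 2) by (apply Rmult_le_pos; [lra | apply pow2_ge_0]).
nra.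
Qed.

Theorem lemma2 (N k : nat) (t : R) :
  (3 < N)%nat -> (1 <= k)%nat -> (k <= N - 2)%nat -> 0 < t ->
  It t k N <= / 2 * sqrt (PI / 2) * (INR N / sqrt t)
               * exp (- (2 * t * INR k ^ 2 / INR N ^ 2))
  /\
  It t k N <= / 2 * (INR N ^ 2 / (INR k * t))
               * exp (- (2 * t * INR k ^ 2 / INR N ^ 2)).
Proof.
intros N_gt3 k_ge1 k_le t_gt0.
assert (PI_gt0 : 0 < PI) by apply PI_RGT_0.
assert (N_pos : 0 < INR N) by (apply lt_0_INR; lia).
assert (k_geR : 1 <= INR k) by (apply (le_INR 1); lia).
set (a := 2 * t / INR N ^ 2).
assert (a_gt0 : 0 < a) by (apply Rdiv_pos_pos; nra).
replace (- (2 * t * INR k ^ 2 / INR N ^ 2)) with (- a * INR k ^ 2) by (unfold a; field; lra).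
assert (E_gt0 := exp_pos (- a * INR k ^ 2)).
assert (It_le := It_le_sum_exp_neg_sq t k N ltac:(lra) ltac:(lia) k_le).
fold a in It_le.
split.
- eapply Rle_trans; [apply It_le | eapply Rle_trans].
  { apply sum_exp_neg_sq_shift_le; [lra | apply pos_INR]. }
  rewrite Rmult_comm; apply Rmult_le_compat_r; [lra |].
  replace (/ 2 * sqrt (PI / 2) * (INR N / sqrt t)) with (/ 2 * sqrt (PI / a)).
  { apply Gaussian.sum_exp_neg_sq_le, a_gt0. }
  assert (0 < sqrt t) by (apply sqrt_lt_R0; lra).
  replace (PI / a) with (PI / 2 * (INR N ^ 2 / t)) by (unfold a; field; lra).
  rewrite sqrt_mult_alt, (sqrt_div_alt (INR N ^ 2)), sqrt_pow2 by nra.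
  field; lra.
- eapply Rle_trans; [apply It_le | eapply Rle_trans].
  { apply sum_exp_neg_sq_shift_le_geom; lra. }
  rewrite Rmult_comm; apply Rmult_le_compat_r; [lra |].
  eapply Rle_trans; [apply sum_exp_neg_mul_le; nra |].
  replace (/ (2 * a * INR k)) with (/ 4 * (INR N ^ 2 / (INR k * t))) by (unfold a; field; lra).
  apply Rmult_le_compat_r; [| lra].
  apply Rlt_le, Rdiv_pos_pos; nra.
Qed.
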